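(* Let $p$ be a prime and let $A$ be the $p\times p$ matrix over $\mathbb{F}_p$ with rows and columns indexed by $0,1,\dots,p-1$ defined by $A(s,s)=0$ for all $s$, $A(s,0)=1$ for $s=1,\dots,p-1$, and $A(s,t)=(s-t)^{-1}$ for $s\in\{0,\dots,p-1\}$, $t\in\{1,\dots,p-1\}$, $s\neq t$. Then every $2\times 2$ submatrix of $A$ is invertible. *)

From mathcomp Require Import all_boot all_order all_algebra.
Set Implicit Arguments. Unset Strict Implicit. Unset Printing Implicit Defensive.
Import GRing.Theory.
Local Open Scope ring_scope.

Definition Amat (p : nat) : 'M['F_p]_p :=
  \matrix_(s < p, t < p)
    if s == t then 0
    else if (t : nat) == 0%N then 1
    else ((s : nat)%:R - (t : nat)%:R)^-1.

From mathcomp Require Import all_boot all_order all_algebra.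
From mathcomp Require Import ring.
Set Implicit Arguments. Unset Strict Implicit. Unset Printing Implicit Defensive.
Import GRing.Theory.
Local Open Scope ring_scope.

(* A is a Cauchy-like matrix: off the diagonal its entries are 1 / D(s,t), with
   D(s,t) = s - t, except in column 0 where D(s,0) = 1.  In the 2x2 minor
   A(a,c) A(b,d) - A(a,d) A(b,c), if a row index meets a column index then exactly
   one of the two products vanishes and the other is a product of off-diagonal,
   hence nonzero, entries.  Otherwise the minor vanishes iff
   D(a,c) D(b,d) = D(a,d) D(b,c), and the difference of these two products is
   (a - b)(c - d), or +-(a - b) when c or d is the column 0. *)

Lemma det_mx22 (R : comNzRingType) (M : 'M[R]_2) :
  \det M = M ord0 ord0 * M ord_max ord_max - M ord0 ord_max * M ord_max ord0.
Proof.
rewrite (expand_det_row _ ord0) !big_ord_recl big_ord0 addr0 /cofactor.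
rewrite !det_mx11 !mxE /= expr0 expr1 mul1r mulN1r mulrN.
have -> : lift ord0 (0 : 'I_1) = ord_max :> 'I_2 by apply/val_inj.
by have -> : lift ord_max (0 : 'I_1) = ord0 :> 'I_2 by apply/val_inj.
Qed.

Section CauchyLikeMatrix.

Variables (F : fieldType) (n : nat) (x : 'I_n -> F) (t0 : 'I_n).
Hypothesis x_inj : injective x.

Definition cauchy_denom (s t : 'I_n) : F := if t == t0 then 1 else x s - x t.

Definition cauchy_mx : 'M[F]_n :=
  \matrix_(s, t) if s == t then 0 else (cauchy_denom s t)^-1.

Lemma cauchy_denom_neq0 (s t : 'I_n) : s != t -> cauchy_denom s t != 0.
Proof.
by move=> st; rewrite /cauchy_denom; case: ifP; rewrite ?oner_eq0 // subr_eq0 inj_eq.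
Qed.

Lemma cauchy_mx_diag (s : 'I_n) : cauchy_mx s s = 0.
Proof. by rewrite mxE eqxx. Qed.

Lemma cauchy_mx_eq0 (s t : 'I_n) : (cauchy_mx s t == 0) = (s == t).
Proof.
have [->|st] := eqVneq s t; first by rewrite cauchy_mx_diag !eqxx.
by rewrite mxE (negPf st) invr_eq0 (negPf (cauchy_denom_neq0 st)).
Qed.

Lemma cauchy_denom_cross (a b c d : 'I_n) : a != b -> c != d ->
  cauchy_denom a c * cauchy_denom b d != cauchy_denom a d * cauchy_denom b c.
Proof.
move=> ab cd; rewrite -subr_eq0 /cauchy_denom.
case: (eqVneq c t0) => [ct0|_]; case: (eqVneq d t0) => [dt0|_].
- by rewrite ct0 dt0 eqxx in cd.
- by rewrite mul1r mulr1 opprB addrA subrK subr_eq0 inj_eq // eq_sym.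
- by rewrite mul1r mulr1 opprB addrA subrK subr_eq0 inj_eq.
- have -> : (x a - x c) * (x b - x d) - (x a - x d) * (x b - x c)
            = (x a - x b) * (x c - x d) by ring.
  by rewrite mulf_neq0 // subr_eq0 inj_eq.
Qed.

Lemma det_mxsub_cauchy (f g : 'I_2 -> 'I_n) :
  f ord0 != f ord_max -> g ord0 != g ord_max -> \det (mxsub f g cauchy_mx) != 0.
Proof.
rewrite det_mx22 ![mxsub _ _ _ _ _]mxE subr_eq0.
move: (f ord0) (f ord_max) (g ord0) (g ord_max) => a b c d ab cd.
have [ca|ac] := eqVneq a c.
  by subst c; rewrite cauchy_mx_diag mul0r eq_sym mulf_eq0 !cauchy_mx_eq0 negb_or cd eq_sym ab.
have [db|bd] := eqVneq b d.
  by subst d; rewrite cauchy_mx_diag mulr0 eq_sym mulf_eq0 !cauchy_mx_eq0 negb_or ab eq_sym cd.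
have [da|ad] := eqVneq a d.
  by subst d; rewrite cauchy_mx_diag mul0r mulf_eq0 !cauchy_mx_eq0 negb_or ac.
have [cb|bc] := eqVneq b c.
  by subst c; rewrite cauchy_mx_diag mulr0 mulf_eq0 !cauchy_mx_eq0 negb_or ac.
rewrite !mxE (negPf ac) (negPf bd) (negPf ad) (negPf bc) -!invfM (inj_eq invr_inj).
exact: cauchy_denom_cross.
Qed.

End CauchyLikeMatrix.

Lemma natr_Fp_inj (p : nat) : prime p -> injective (fun s : 'I_p => (s : nat)%:R : 'F_p).
Proof.
move=> hp s t /(congr1 val); rewrite /= !val_Fp_nat // !modn_small //.
exact: val_inj.
Qed.

Lemma Amat_cauchy (p : nat) (hp : prime p) :
  Amat p = cauchy_mx (fun s : 'I_p => (s : nat)%:R : 'F_p) (Ordinal (prime_gt0 hp)).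
Proof.
apply/matrixP => s t; rewrite !mxE /cauchy_denom.
have -> : (t == Ordinal (prime_gt0 hp)) = (t == 0%N :> nat) by [].
by case: ifP => // _; case: ifP; rewrite ?invr1.
Qed.

Theorem lemma2p7 (p : nat) (hp : prime p) (f g : 'I_2 -> 'I_p) :
  (f ord0 < f ord_max)%N -> (g ord0 < g ord_max)%N ->
  mxsub f g (Amat p) \in unitmx.
Proof.
move=> hf hg; rewrite Amat_cauchy unitmxE unitfE.
apply: det_mxsub_cauchy; first exact: natr_Fp_inj.
  by rewrite -val_eqE neq_ltn hf.
by rewrite -val_eqE neq_ltn hg.
Qed.
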